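(* If a CFSTR contains a self-catalyzing reaction, then it fails the Jacobian Criterion. Conversely, if a CFSTR $\mathfrak{G}$ with non-flow subnetwork $G$ contains no self-catalyzing reaction, then $\mathfrak{G}$ passes the Jacobian Criterion if and only if every $k$-square embedded network of $G$ with $k\ge2$ has nonnegative orientation.
   Context: A chemical reaction network has species $X_1,\dots,X_s$ and reactions $y\to y'$ with $y,y'\in\mathbb{Z}_{\ge0}^s$, $y\ne y'$. Flow reactions are $0\to X_i$ and $X_i\to0$; others are non-flow. A CFSTR contains $X_i\to0$ for every species; its non-flow subnetwork consists of its non-flow reactions. A reaction $y\to y'$ is self-catalyzing if some species $X_j$ has $1\le y_j<y'_j$. For a list of $n$ reactions $y_k\to y'_k$ on $n$ species: reactant matrix $M$ (row $k$ is $y_k$), reaction matrix $R$ (row $k$ is $y_k-y'_k$), orientation $\operatorname{sign}(\det M\det R)$; empty network has orientation $+1$. A $k$-square embedded network of $G$ is given by $k$ species $S$ and $k$ non-flow reactions of $G$, restricted by deleting all species not in $S$ from both complexes (as a list). A CFSTR with $s$ species passes the Jacobian Criterion if every choice of $s$ distinct non-inflow reactions yields $s\times s$ reactant and reaction matrices (columns indexed by all species) with nonnegative orientation. *)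

From mathcomp Require Import all_boot all_order all_algebra.
Set Implicit Arguments. Unset Strict Implicit. Unset Printing Implicit Defensive.
Import Order.TTheory GRing.Theory Num.Theory.
Local Open Scope ring_scope.

(* Species are 'I_s; a complex is a vector in Z_{>=0}^s. *)
Definition complex (s : nat) := {ffun 'I_s -> nat}.
(* A reaction y -> y' is the pair (y, y'). *)
Definition reaction (s : nat) := (complex s * complex s)%type.

Definition zero_cplx (s : nat) : complex s := [ffun _ => 0%N].
Definition unit_cplx (s : nat) (i : 'I_s) : complex s := [ffun j => nat_of_bool (j == i)].

Definition is_inflow (s : nat) (r : reaction s) : bool :=
  (r.1 == zero_cplx s) && [exists i, r.2 == unit_cplx i].
Definition is_outflow (s : nat) (r : reaction s) : bool :=
  (r.2 == zero_cplx s) && [exists i, r.1 == unit_cplx i].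
Definition is_flow (s : nat) (r : reaction s) : bool := is_inflow r || is_outflow r.

Definition network (s : nat) (N : seq (reaction s)) : Prop :=
  uniq N /\ all (fun r : reaction s => r.1 != r.2) N.

Definition is_CFSTR (s : nat) (N : seq (reaction s)) : Prop :=
  network N /\ forall i : 'I_s, (unit_cplx i, zero_cplx s) \in N.

Definition nonflow_sub (s : nat) (N : seq (reaction s)) : seq (reaction s) :=
  [seq r <- N | ~~ is_flow r].

Definition self_catalyzing (s : nat) (r : reaction s) : bool :=
  [exists j : 'I_s, (0 < r.1 j)%N && (r.1 j < r.2 j)%N].

Definition reactant_mx (s n : nat) (rs : 'I_n -> reaction s) (cols : 'I_n -> 'I_s)
  : 'M[int]_n := \matrix_(k, j) (((rs k).1 (cols j))%:Z).
Definition reaction_mx (s n : nat) (rs : 'I_n -> reaction s) (cols : 'I_n -> 'I_s)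
  : 'M[int]_n := \matrix_(k, j) (((rs k).1 (cols j))%:Z - ((rs k).2 (cols j))%:Z).

(* orientation = sign(det M * det R); equals 1 for n = 0 *)
Definition orientation (s n : nat) (rs : 'I_n -> reaction s) (cols : 'I_n -> 'I_s) : int :=
  sgz (\det (reactant_mx rs cols) * \det (reaction_mx rs cols)).

Definition passes_JC (s : nat) (N : seq (reaction s)) : Prop :=
  forall rs : 'I_s -> reaction s,
    injective rs -> (forall k, rs k \in N) -> (forall k, ~~ is_inflow (rs k)) ->
    0 <= orientation rs id.

(* k-square embedded network of G: k distinct species S (given by an injection
   'I_k -> 'I_s) and k distinct reactions of G, restricted to the species in S;
   its orientation is orientation rs S. *)
Definition embedded_nonneg (s : nat) (G : seq (reaction s)) (k : nat) : Prop :=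
  forall (S : 'I_k -> 'I_s) (rs : 'I_k -> reaction s),
    injective S -> injective rs -> (forall i, rs i \in G) ->
    0 <= orientation rs S.

From mathcomp Require Import all_boot all_order all_algebra all_fingroup.
Set Implicit Arguments. Unset Strict Implicit. Unset Printing Implicit Defensive.
Import Order.TTheory GRing.Theory Num.Theory.

(* Everything rests on one observation about outflow reactions X_c -> 0: in a
   square system whose species columns include c, the row of X_c -> 0 is the
   unit vector e_c both in the reactant and in the reaction matrix.  Expanding
   both determinants along that row multiplies each by the same sign, so the
   orientation equals that of the system with this reaction and species
   removed; if c is not among the columns, the reactant matrix has a zero row
   and the orientation is 0.

   Consequently (1) any square system of non-flow reactions on k <= s species
   can be completed by the outflows of the s - k missing species to a full
   s x s system with the same orientation, and (2) conversely the outflow rows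
   of a full system can be peeled off until only non-flow reactions remain.
   A 1 x 1 system (y -> y', X_j) has orientation sgn(y_j (y_j - y'_j)), which is
   negative exactly when the reaction is self-catalyzing at X_j.  The theorem
   follows: (1) turns a self-catalyzing reaction into a full system of negative
   orientation and an embedded network into a Jacobian-Criterion minor, while
   (2) reduces the Criterion to embedded networks of size 0, 1 or >= 2. *)

Local Open Scope ring_scope.

Section Determinants.
Variable R : comPzRingType.

Lemma det_unit_row n (A : 'M[R]_n.+1) i j :
  (forall j', A i j' = (j' == j)%:R) ->
  \det A = (-1) ^+ (i + j) * \det (row' i (col' j A)).
Proof.
move=> Ai; rewrite (expand_det_row A i) (bigD1 j) //= big1 ?addr0.
  by rewrite Ai eqxx mul1r.
by move=> k /negbTE neq_kj; rewrite Ai neq_kj mul0r.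
Qed.

Lemma det_zero_row n (A : 'M[R]_n) i : (forall j, A i j = 0) -> \det A = 0.
Proof. by move=> Ai; rewrite (expand_det_row A i) big1 // => k _; rewrite Ai mul0r. Qed.

Lemma det_conj_perm n (A : 'M[R]_n) (p : {perm 'I_n}) :
  \det (row_perm p (col_perm p A)) = \det A.
Proof.
rewrite row_permE col_permE !det_mulmx !det_perm odd_permV mulrCA mulrA.
by rewrite -mulrA -exprD addnn -mul2n exprM sqrrN !expr1n mulr1.
Qed.

End Determinants.

Section ConsFun.
Variables (T : Type) (n : nat).

Definition cons_fun (x : T) (f : 'I_n -> T) : 'I_n.+1 -> T :=
  fun k => if unlift ord0 k is Some k' then f k' else x.

Lemma cons_fun0 x f : cons_fun x f ord0 = x.
Proof. by rewrite /cons_fun unlift_none. Qed.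

Lemma cons_fun_lift x f k : cons_fun x f (lift ord0 k) = f k.
Proof. by rewrite /cons_fun liftK. Qed.

Lemma cons_fun_inj x f :
  injective f -> (forall k, f k <> x) -> injective (cons_fun x f).
Proof.
move=> inj_f fx a b.
case: (unliftP ord0 a) => [a'|] ->; case: (unliftP ord0 b) => [b'|] ->;
  rewrite ?cons_fun_lift ?cons_fun0 //.
- by move/inj_f => ->.
- by move/fx.
- by move/esym/fx.
Qed.

End ConsFun.

Lemma ord1_injective (T : Type) (f : 'I_1 -> T) : injective f.
Proof. by move=> a b _; rewrite (ord1 a) (ord1 b). Qed.

Section Reactions.
Variable s : nat.

Definition outflow (i : 'I_s) : reaction s := (unit_cplx i, zero_cplx s).

Lemma unit_cplx_inj : injective (@unit_cplx s).
Proof.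
move=> i c /(congr1 (fun y : complex s => y i)); rewrite !ffunE eqxx.
by case: eqP.
Qed.

Lemma outflow_inj : injective outflow.
Proof. by move=> i c [/unit_cplx_inj]. Qed.

Lemma is_outflowP (r : reaction s) : is_outflow r -> exists i, r = outflow i.
Proof. by case: r => y y' /andP[/eqP /= -> /existsP[i /eqP /= ->]]; exists i. Qed.

Lemma outflow_is_outflow i : is_outflow (outflow i).
Proof. by apply/andP; split => //; apply/existsP; exists i. Qed.

Lemma outflow_not_inflow i : ~~ is_inflow (outflow i).
Proof. by apply/negP => /andP[/eqP/(congr1 (fun y : complex s => y i))]; rewrite !ffunE eqxx. Qed.

(* A self-catalyzing reaction has a nonzero reactant and a nonzero product. *)
Lemma self_catalyzing_nonflow (r : reaction s) : self_catalyzing r -> ~~ is_flow r.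
Proof.
case/existsP=> j /andP[pos_j lt_j]; rewrite negb_or; apply/andP; split.
  by apply/negP => /andP[/eqP y0 _]; move: pos_j; rewrite y0 ffunE.
by apply/negP => /andP[/eqP y0 _]; move: lt_j; rewrite y0 ffunE.
Qed.

End Reactions.

Section Orientation.
Variable s : nat.

Lemma orientation_ext n (rs rs' : 'I_n -> reaction s) (cols cols' : 'I_n -> 'I_s) :
  rs =1 rs' -> cols =1 cols' -> orientation rs cols = orientation rs' cols'.
Proof.
move=> E_rs E_cols; rewrite /orientation.
have -> : reactant_mx rs cols = reactant_mx rs' cols'.
  by apply/matrixP => a b; rewrite !mxE E_rs E_cols.
have -> // : reaction_mx rs cols = reaction_mx rs' cols'.
by apply/matrixP => a b; rewrite !mxE E_rs E_cols.
Qed.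

Lemma orientation1_lt0 (rs : 'I_1 -> reaction s) (cols : 'I_1 -> 'I_s) :
  (orientation rs cols < 0) =
  (0 < (rs ord0).1 (cols ord0) < (rs ord0).2 (cols ord0))%N.
Proof.
rewrite /orientation !det_mx11 !mxE sgz_lt0.
set a := (rs _).1 _; set b := (rs _).2 _.
case: (posnP a) => [-> | pos_a]; first by rewrite mul0r.
by rewrite pmulr_rlt0 ?ltz_nat // subr_lt0 ltz_nat.
Qed.

Lemma orientation_outflow_row n (rs : 'I_n.+1 -> reaction s) cols i j c :
  injective cols -> rs i = outflow c -> cols j = c ->
  orientation rs cols = orientation (rs \o lift i) (cols \o lift j).
Proof.
move=> inj_cols rs_i cols_j; rewrite /orientation.
have col_c j' : (cols j' == c) = (j' == j) by rewrite -cols_j (inj_eq inj_cols).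
rewrite (@det_unit_row _ _ (reactant_mx rs cols) i j); last first.
  by move=> j'; rewrite mxE rs_i ffunE col_c; case: (j' == j).
rewrite (@det_unit_row _ _ (reaction_mx rs cols) i j); last first.
  by move=> j'; rewrite mxE rs_i !ffunE col_c subr0; case: (j' == j).
rewrite mulrACA -exprD addnn -mul2n exprM sqrrN !expr1n mul1r.
have -> : row' i (col' j (reactant_mx rs cols)) = reactant_mx (rs \o lift i) (cols \o lift j).
  by apply/matrixP => a b; rewrite !mxE.
have -> // : row' i (col' j (reaction_mx rs cols)) = reaction_mx (rs \o lift i) (cols \o lift j).
by apply/matrixP => a b; rewrite !mxE.
Qed.

(* The outflow of a species outside the columns gives a zero reactant row. *)
Lemma orientation_outflow_missing n (rs : 'I_n -> reaction s) cols i c :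
  rs i = outflow c -> (forall j, cols j != c) -> orientation rs cols = 0.
Proof.
move=> rs_i cols_c; rewrite /orientation (@det_zero_row _ _ (reactant_mx rs cols) i).
  by rewrite mul0r sgz0.
by move=> j; rewrite mxE rs_i ffunE (negbTE (cols_c j)).
Qed.

Lemma orientation_cons_outflow n (rs : 'I_n -> reaction s) cols c :
  injective cols -> (forall j, cols j <> c) ->
  orientation (cons_fun (outflow c) rs) (cons_fun c cols) = orientation rs cols.
Proof.
move=> inj_cols cols_c.
rewrite (@orientation_outflow_row _ _ _ ord0 ord0 c) ?cons_fun0 //.
  by apply: orientation_ext => k /=; rewrite cons_fun_lift.
exact: cons_fun_inj.
Qed.

Lemma orientation_perm (rs : 'I_s -> reaction s) (p : {perm 'I_s}) :
  orientation rs p = orientation (rs \o p^-1%g) id.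
Proof.
rewrite /orientation.
have -> : reactant_mx rs p = row_perm p (col_perm p (reactant_mx (rs \o p^-1%g) id)).
  by apply/matrixP => a b; rewrite !mxE /= permK.
have -> : reaction_mx rs p = row_perm p (col_perm p (reaction_mx (rs \o p^-1%g) id)).
  by apply/matrixP => a b; rewrite !mxE /= permK.
by rewrite !det_conj_perm.
Qed.

End Orientation.

Section Completion.
Variable s : nat.

Definition outflows_covered n (rs : 'I_n -> reaction s) (cols : 'I_n -> 'I_s) :=
  forall k i, rs k = outflow i -> exists j, cols j = i.

Lemma exists_missing_species n (cols : 'I_n -> 'I_s) :
  injective cols -> (n < s)%N -> exists c, forall j, cols j <> c.
Proof.
move=> inj_cols lt_ns.
case: (pickP [pred c | c \notin codom cols]) => [c /= c_new | all_listed].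
  by exists c => j cols_j; move: c_new; rewrite -cols_j codom_f.
have : (#|'I_s| <= #|codom cols|)%N.
  by apply: subset_leq_card; apply/subsetP => c _; move: (all_listed c) => /= /negbFE.
by rewrite card_ord card_codom // card_ord leqNgt lt_ns.
Qed.

Lemma complete_system m : forall n (rs : 'I_n -> reaction s) (cols : 'I_n -> 'I_s),
  (n + m)%N = s -> injective cols -> injective rs -> outflows_covered rs cols ->
  exists rs' : 'I_s -> reaction s, [/\ injective rs',
    forall k, is_outflow (rs' k) \/ exists k', rs' k = rs k' &
    orientation rs' id = orientation rs cols].
Proof.
elim: m => [|m IHm] n rs cols.
  rewrite addn0 => ns inj_cols inj_rs _; subst n.
  pose p := perm inj_cols.
  exists (rs \o p^-1%g); split.
  - by move=> a b /inj_rs /perm_inj.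
  - by move=> k; right; exists (p^-1%g k).
  by rewrite -orientation_perm; apply: orientation_ext => // j; rewrite permE.
move=> size_ns inj_cols inj_rs covered.
have [c c_new] : exists c, forall j, cols j <> c.
  by apply: exists_missing_species => //; rewrite -size_ns -addSnnS leq_addr.
have rs_c k : rs k <> outflow c.
  by move=> /covered[j cols_j]; apply: (c_new j).
have covered' : outflows_covered (cons_fun (outflow c) rs) (cons_fun c cols).
  move=> k i; case: (unliftP ord0 k) => [k'|] ->; rewrite ?cons_fun_lift ?cons_fun0.
    by move=> /covered[j cols_j]; exists (lift ord0 j); rewrite cons_fun_lift.
  by move=> /outflow_inj <-; exists ord0; rewrite cons_fun0.
have [rs' [inj_rs' rs'_from orient_rs']] :=
  IHm n.+1 _ _ (etrans (addSnnS n m) size_ns)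
    (cons_fun_inj inj_cols c_new) (cons_fun_inj inj_rs rs_c) covered'.
exists rs'; split => //; last by rewrite orient_rs' orientation_cons_outflow.
move=> k; case: (rs'_from k) => [|[k' ->]]; first by left.
case: (unliftP ord0 k') => [k''|] ->; rewrite ?cons_fun_lift ?cons_fun0.
  by right; exists k''.
by left; apply: outflow_is_outflow.
Qed.

End Completion.

Lemma JC_square_subsystems s (N : seq (reaction s)) n
    (rs : 'I_n -> reaction s) (cols : 'I_n -> 'I_s) :
  is_CFSTR N -> passes_JC N -> injective cols -> injective rs ->
  (forall k, rs k \in N) -> (forall k, ~~ is_flow (rs k)) ->
  0 <= orientation rs cols.
Proof.
move=> [_ outflows_N] JC inj_cols inj_rs rs_N rs_nonflow.
have le_ns : (n <= s)%N by have := leq_card _ inj_cols; rewrite !card_ord.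
have [|rs' [inj_rs' rs'_from <-]] := complete_system (subnKC le_ns) inj_cols inj_rs.
  move=> k i rs_k; move: (rs_nonflow k).
  by rewrite rs_k /is_flow outflow_is_outflow orbT.
apply: JC => // k; case: (rs'_from k) => [/is_outflowP[i ->] | [k' ->]] //.
- exact: outflows_N.
- exact: outflow_not_inflow.
- by move: (rs_nonflow k'); rewrite negb_or => /andP[].
Qed.

Section FromEmbedded.
Variables (s : nat) (N : seq (reaction s)).
Hypothesis no_self_cat : forall r, r \in N -> ~~ self_catalyzing r.
Hypothesis embedded_ok : forall k : nat, (2 <= k)%N -> embedded_nonneg (nonflow_sub N) k.

(* Systems of non-flow reactions are embedded networks of the non-flow
   subnetwork; sizes 0 and 1 are settled directly. *)
Lemma nonflow_subsystem_nonneg n (rs : 'I_n -> reaction s) (cols : 'I_n -> 'I_s) :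
  injective cols -> injective rs -> (forall k, rs k \in N) ->
  (forall k, ~~ is_flow (rs k)) -> 0 <= orientation rs cols.
Proof.
move=> inj_cols inj_rs rs_N rs_nonflow.
have rs_G k : rs k \in nonflow_sub N by rewrite mem_filter rs_nonflow rs_N.
case: n => [|[|n]] in rs cols inj_cols inj_rs rs_N rs_nonflow rs_G *.
- by rewrite /orientation !det_mx00 mulr1 sgz1.
- rewrite leNgt orientation1_lt0; apply/negP => sc.
  by move/negP: (no_self_cat (rs_N ord0)); apply; apply/existsP; exists (cols ord0).
- exact: embedded_ok.
Qed.

(* Induction on the size: outflow rows are removed one at a time. *)
Lemma noninflow_subsystem_nonneg n : forall (rs : 'I_n -> reaction s) (cols : 'I_n -> 'I_s),
  injective cols -> injective rs -> (forall k, rs k \in N) ->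
  (forall k, ~~ is_inflow (rs k)) -> 0 <= orientation rs cols.
Proof.
elim: n => [|n IHn] rs cols inj_cols inj_rs rs_N rs_noninflow.
  by apply: nonflow_subsystem_nonneg => // -[].
case: (pickP [pred k | is_outflow (rs k)]) => [i /= /is_outflowP[c rs_i] | no_out];
  last first.
  apply: nonflow_subsystem_nonneg => // k.
  by rewrite negb_or rs_noninflow; apply/negbT/no_out.
case: (pickP [pred j | cols j == c]) => [j /= /eqP cols_j | c_missing].
  rewrite (orientation_outflow_row inj_cols rs_i cols_j); apply: IHn => //.
  - by move=> a b /inj_cols /lift_inj.
  - by move=> a b /inj_rs /lift_inj.
  - by move=> k; apply: rs_N.
  - by move=> k; apply: rs_noninflow.
by rewrite (orientation_outflow_missing rs_i) // => j; apply/negbT/c_missing.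
Qed.

End FromEmbedded.

Theorem mainTheorem4 (s : nat) (N : seq (reaction s)) :
  is_CFSTR N ->
  ((exists2 r, r \in N & self_catalyzing r) -> ~ passes_JC N) /\
  ((forall r, r \in N -> ~~ self_catalyzing r) ->
     (passes_JC N <-> forall k : nat, (2 <= k)%N -> embedded_nonneg (nonflow_sub N) k)).
Proof.
move=> CF; split.
  (* the 1 x 1 system (r, X_j) has negative orientation and completes to a
     full Jacobian-Criterion minor *)
  move=> [r r_N sc_r] JC; have /existsP[j sc_j] := sc_r.
  have := JC_square_subsystems (rs := fun _ : 'I_1 => r) (cols := fun _ => j) CF JC
    (@ord1_injective _ _) (@ord1_injective _ _) (fun _ => r_N)
    (fun _ => self_catalyzing_nonflow sc_r).
  by rewrite leNgt orientation1_lt0 sc_j.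
move=> no_self_cat; split.
  (* embedded networks are square non-flow subsystems *)
  move=> JC k _ S rs inj_S inj_rs rs_G.
  apply: JC_square_subsystems CF JC inj_S inj_rs _ _ => i; move: (rs_G i);
    by rewrite mem_filter => /andP[].
(* a Jacobian-Criterion minor is a square non-inflow subsystem *)
move=> embedded_ok rs inj_rs rs_N rs_noninflow.
by apply: (noninflow_subsystem_nonneg no_self_cat embedded_ok) => // a b.
Qed.
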